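(* Let $n,p$ be positive integers, $X\in\mathbb{R}^{n\times p}$, $\mathbf y\in\mathbb{R}^n$, $\delta>0$ and $\lambda>0$. Then \[ \nabla f_\lambda(\mathbf t)=\boldsymbol\zeta_{\mathbf t}+\lambda\mathbf 1,\qquad \mathbf t\in(0,1)^p, \] and, for every $\mathbf w\in\mathbb{R}^p$, with $\mathbf t=\mathbf t(\mathbf w)$, \[ \nabla g_\lambda(\mathbf w)=(\boldsymbol\zeta_{\mathbf t}+\lambda\mathbf 1)\odot\big(2\mathbf w\odot\exp(-\mathbf w\odot\mathbf w)\big), \] where \[ \boldsymbol\zeta_{\mathbf t}=2\big(\widetilde{\boldsymbol\beta}_{\mathbf t}\odot(\mathbf a_{\mathbf t}-\mathbf d_{\mathbf t})\big)-2(\mathbf b_{\mathbf t}\odot\mathbf c_{\mathbf t}), \] with \begin{align*} \mathbf a_{\mathbf t}&=\left(\tfrac{X^\top X}{n}\right)(\mathbf t\odot\widetilde{\boldsymbol\beta}_{\mathbf t})-\tfrac{X^\top\mathbf y}{n},\qquad \mathbf b_{\mathbf t}=\mathbf a_{\mathbf t}-\tfrac{\delta}{n}(\mathbf t\odot\widetilde{\boldsymbol\beta}_{\mathbf t}),\\ \mathbf c_{\mathbf t}&=L_{\mathbf t}^{-1}(\mathbf t\odot\mathbf a_{\mathbf t}),\qquad \mathbf d_{\mathbf t}=\left(\tfrac{X^\top X}{n}-\tfrac{\delta}{n}I\right)(\mathbf t\odot\mathbf c_{\mathbf t}). \end{align*}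
   Context: For $\mathbf t\in[0,1]^p$, $T_{\mathbf t}=\mathrm{Diag}(t_1,\dots,t_p)$, $X_{\mathbf t}=XT_{\mathbf t}$, $L_{\mathbf t}=\frac1n[X_{\mathbf t}^\top X_{\mathbf t}+\delta(I-T_{\mathbf t}^2)]$ with $I$ the $p\times p$ identity, $\widetilde{\boldsymbol\beta}_{\mathbf t}:=L_{\mathbf t}^{+}\left(X_{\mathbf t}^\top\mathbf y/n\right)$ with $L_{\mathbf t}^+$ the Moore–Penrose pseudo-inverse, $f_\lambda(\mathbf t)=\frac1n\|\mathbf y-X_{\mathbf t}\widetilde{\boldsymbol\beta}_{\mathbf t}\|_2^2+\lambda\sum_{j=1}^p t_j$, $\mathbf t(\mathbf w)$ is defined by $t_j(w_j)=1-\exp(-w_j^2)$, and $g_\lambda(\mathbf w)=f_\lambda(\mathbf t(\mathbf w))$. Here $\odot$ is the element-wise product, $\exp$ is applied element-wise, and $\mathbf 1$ is the all-ones vector in $\mathbb{R}^p$. *)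

From mathcomp Require Import all_boot all_order all_algebra.
From mathcomp Require Import all_classical all_reals all_analysis.
Set Implicit Arguments. Unset Strict Implicit. Unset Printing Implicit Defensive.
Import Order.TTheory GRing.Theory Num.Theory.
Import numFieldNormedType.Exports.
Local Open Scope classical_set_scope.
Local Open Scope ring_scope.

Section Defs.
Variables (R : realType) (n p : nat).
Variables (X : 'M[R]_(n, p)) (y : 'cV[R]_n) (delta lambda : R).

Definition hadam (u v : 'cV[R]_p) : 'cV[R]_p := \col_j (u j 0 * v j 0).

(* Moore--Penrose pseudo-inverse (real case): the unique B with the four
   Penrose equations; it always exists, so xget picks it. *)
Definition is_MPinv (A B : 'M[R]_p) : Prop :=
  [/\ A *m B *m A = A, B *m A *m B = B, (A *m B)^T = A *m B & (B *m A)^T = B *m A].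
Definition MPinv (A : 'M[R]_p) : 'M[R]_p := xget 0 [set B | is_MPinv A B].

Definition Tt (t : 'cV[R]_p) : 'M[R]_p := diag_mx t^T.
Definition Xt (t : 'cV[R]_p) : 'M[R]_(n, p) := X *m Tt t.
Definition Lt (t : 'cV[R]_p) : 'M[R]_p :=
  (n%:R)^-1 *: ((Xt t)^T *m Xt t + delta *: (1%:M - Tt t *m Tt t)).
Definition betat (t : 'cV[R]_p) : 'cV[R]_p :=
  MPinv (Lt t) *m ((n%:R)^-1 *: ((Xt t)^T *m y)).

Definition sqnorm (v : 'cV[R]_n) : R := \sum_i (v i 0) ^+ 2.

Definition f_lam (t : 'cV[R]_p) : R :=
  (n%:R)^-1 * sqnorm (y - Xt t *m betat t) + lambda * \sum_j t j 0.

Definition t_of (w : 'cV[R]_p) : 'cV[R]_p := \col_j (1 - expR (- (w j 0 ^+ 2))).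

Definition g_lam (w : 'cV[R]_p) : R := f_lam (t_of w).

Definition G : 'M[R]_p := (n%:R)^-1 *: (X^T *m X).

Definition a_t (t : 'cV[R]_p) : 'cV[R]_p :=
  G *m hadam t (betat t) - (n%:R)^-1 *: (X^T *m y).
Definition b_t (t : 'cV[R]_p) : 'cV[R]_p :=
  a_t t - (delta / n%:R) *: hadam t (betat t).
Definition c_t (t : 'cV[R]_p) : 'cV[R]_p := invmx (Lt t) *m hadam t (a_t t).
Definition d_t (t : 'cV[R]_p) : 'cV[R]_p :=
  (G - (delta / n%:R) *: 1%:M) *m hadam t (c_t t).

Definition zeta (t : 'cV[R]_p) : 'cV[R]_p :=
  2 *: hadam (betat t) (a_t t - d_t t) - 2 *: hadam (b_t t) (c_t t).

Definition has_gradient (F : 'cV[R]_p -> R) (x gr : 'cV[R]_p) : Prop :=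
  differentiable F x /\ forall h : 'cV[R]_p, 'd F x h = \sum_j gr j 0 * h j 0.

End Defs.

(* Where L_t is invertible the pseudo-inverse in beta_t is the inverse, and
   invertibility is an open condition, so near such a t the function f_lambda is
   a rational function of t that can be differentiated with the product rule and
   d(L^-1) = - L^-1 dL L^-1.  L_t is invertible on (0,1)^p and on the image of
   t(w), because n L_t = X_t^T X_t + delta diag(1 - t_j^2) is then positive
   definite.  Two identities make the differential collapse to <zeta_t, k>:
   X^T r / n = - a_t for the residual r = y - X_t beta_t, and the symmetry of
   L_t, which moves L_t^-1 onto t ⊙ a_t to produce c_t. *)

From HB Require Import structures.
From mathcomp Require Import all_boot all_order all_algebra.
From mathcomp Require Import all_classical all_reals all_analysis.
From mathcomp Require Import ring lra.
Set Implicit Arguments. Unset Strict Implicit. Unset Printing Implicit Defensive.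
Import Order.TTheory GRing.Theory Num.Theory.
Import numFieldNormedType.Exports.
Local Open Scope ring_scope.

Lemma scaleRE {R : realType} (a b : R) : a *: b = a * b.
Proof. by []. Qed.

Section Differential.
Context {R : realType} {V W : normedModType R}.

Lemma is_diff_unique (f df df' : V -> W) x : is_diff x f df -> is_diff x f df' -> df = df'.
Proof. by move=> [_ <-] [_ <-]. Qed.

Lemma near_eq_is_diff (f g df : V -> W) x :
  (\forall s \near x, f s = g s) -> is_diff x g df -> is_diff x f df.
Proof.
move=> fg [dg <-].
have fx : f x = g x := nbhs_singleton fg.
have fgx : f \o shift x = cst (f x) + 'd g x +o_ 0 id.
  apply/eqaddoP => e e0.
  have fg0 : \forall h \near 0, f (h + x) = g (h + x).
    by move: fg; rewrite (near_shift 0 x); apply: filterS => h /=; rewrite subr0 addrC.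
  apply: filterS2 fg0 ((eqaddoP _ _ _ _).1 (diff_locally dg) e e0) => h /= E.
  by rewrite !fctE fx E.
have dfg : 'd f x = 'd g x :> (V -> W) := diff_unique (diff_continuous dg) fgx.
split => //; apply/diff_locallyP; rewrite dfg; split => //; exact: diff_continuous.
Qed.

Lemma is_diff_linear (f : {linear V -> W}) x : continuous f -> is_diff x f f.
Proof. by move=> fc; split; [exact: linear_differentiable | exact: diff_lin]. Qed.

Lemma is_diffZl (k dk : V -> R) (v : W) x :
  is_diff x k dk -> is_diff x (fun s => k s *: v) (fun h => dk h *: v).
Proof. by move=> [dk_x <-]; split; [exact: differentiableZl | rewrite diffZl]. Qed.

Lemma is_diff_sum (I : Type) (r : seq I) (P : pred I) (F dF : I -> V -> W) x :
  (forall i, P i -> is_diff x (F i) (dF i)) ->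
  is_diff x (fun s => \sum_(i <- r | P i) F i s) (fun h => \sum_(i <- r | P i) dF i h).
Proof.
move=> HF; rewrite -!fct_sumE.
elim/big_ind2: _ => //; first exact: is_diff_cst.
by move=> f df g dg ? ?; apply: is_diffD.
Qed.

End Differential.

Section ColumnDot.
Context {R : comNzRingType}.

Definition dot {m} (u v : 'cV[R]_m) : R := \sum_j u j 0 * v j 0.

Lemma dotE {m} (u v : 'cV[R]_m) : dot u v = (u^T *m v) 0 0.
Proof. by rewrite mxE; apply: eq_bigr => j _; rewrite mxE. Qed.

Lemma dot0l {m} (v : 'cV[R]_m) : dot 0 v = 0.
Proof. by rewrite dotE trmx0 mul0mx mxE. Qed.

Lemma dotC {m} (u v : 'cV[R]_m) : dot u v = dot v u.
Proof. by apply: eq_bigr => j _; rewrite mulrC. Qed.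

Lemma dotDr {m} (u v w : 'cV[R]_m) : dot u (v + w) = dot u v + dot u w.
Proof. by rewrite !dotE mulmxDr mxE. Qed.

Lemma dotNr {m} (u v : 'cV[R]_m) : dot u (- v) = - dot u v.
Proof. by rewrite !dotE mulmxN mxE. Qed.

Lemma dotBr {m} (u v w : 'cV[R]_m) : dot u (v - w) = dot u v - dot u w.
Proof. by rewrite dotDr dotNr. Qed.

Lemma dotZr {m} a (u v : 'cV[R]_m) : dot u (a *: v) = a * dot u v.
Proof. by rewrite !dotE -scalemxAr mxE. Qed.

Lemma dotMr {m k} (u : 'cV[R]_m) (A : 'M[R]_(m, k)) v :
  dot u (A *m v) = dot (A^T *m u) v.
Proof. by rewrite !dotE trmx_mul trmxK mulmxA. Qed.

End ColumnDot.

Section MatrixDifferential.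
Context {R : realType} {V : normedModType R}.

Lemma differentiable_prod (I : Type) (r : seq I) (P : pred I) (F : I -> V -> R) x :
  (forall i, P i -> differentiable (F i) x) ->
  differentiable (fun s => \prod_(i <- r | P i) F i s) x.
Proof.
move=> HF; rewrite -fct_prodE.
by elim/big_ind: _ => // f g ? ?; exact: differentiableM.
Qed.

Lemma is_diff_mxP {m k} (F dF : V -> 'M[R]_(m, k)) x :
  is_diff x F dF <-> forall i j, is_diff x (fun s => F s i j) (fun h => dF h i j).
Proof.
split=> [HF i j | HF].
  have lin : linear (fun M : 'M[R]_(m, k) => M i j) by move=> a A B; rewrite !mxE.
  pose c : {linear 'M[R]_(m, k) -> R} :=
    HB.pack (fun M : 'M[R]_(m, k) => M i j) (GRing.isLinear.Build _ _ _ _ _ lin).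
  have cc : continuous c := @coord_continuous _ _ _ i j.
  exact: is_diff_comp HF (is_diff_linear (F x) cc).
rewrite (_ : F = fun s => \sum_i \sum_j F s i j *: delta_mx i j); last first.
  by apply/funext => s; rewrite -matrix_sum_delta.
apply: is_diff_eq; first by do 2![apply: is_diff_sum => ? _]; exact: is_diffZl.
by apply/funext => h; rewrite -matrix_sum_delta.
Qed.

Lemma is_diff_mulmx {m k l} (F dF : V -> 'M[R]_(m, k)) (G dG : V -> 'M[R]_(k, l)) x :
  is_diff x F dF -> is_diff x G dG ->
  is_diff x (fun s => F s *m G s) (fun h => dF h *m G x + F x *m dG h).
Proof.
move=> /is_diff_mxP HF /is_diff_mxP HG; apply/is_diff_mxP => i j.
rewrite (_ : (fun s => _) = fun s => \sum_a F s i a * G s a j); last first.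
  by apply/funext => s; rewrite mxE.
apply: is_diff_eq; first by apply: is_diff_sum => a _; exact: is_diffM.
apply/funext => h; rewrite !mxE -big_split; apply: eq_bigr => a _ /=.
by rewrite !fctE !scaleRE; ring.
Qed.

Lemma is_diff_trmx {m k} (F dF : V -> 'M[R]_(m, k)) x :
  is_diff x F dF -> is_diff x (fun s => (F s)^T) (fun h => (dF h)^T).
Proof.
move=> /is_diff_mxP HF; apply/is_diff_mxP => i j.
rewrite (_ : (fun s => _) = fun s => F s j i); last by apply/funext => s; rewrite mxE.
by apply: is_diff_eq (HF j i) _; apply/funext => h; rewrite mxE.
Qed.

Lemma is_diff_diag_mx {m} (d dd : V -> 'rV[R]_m) x :
  is_diff x d dd -> is_diff x (fun s => diag_mx (d s)) (fun h => diag_mx (dd h)).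
Proof.
move=> /is_diff_mxP Hd; apply/is_diff_mxP => i j.
have [<-|nij] := eqVneq i j.
  rewrite (_ : (fun s => _) = fun s => d s 0 i); last first.
    by apply/funext => s; rewrite mxE eqxx.
  by apply: is_diff_eq (Hd 0 i) _; apply/funext => h; rewrite mxE eqxx.
rewrite (_ : (fun s => _) = cst 0); last first.
  by apply/funext => s; rewrite mxE (negPf nij).
by apply: is_diff_eq (is_diff_cst _ _) _; apply/funext => h; rewrite mxE (negPf nij).
Qed.

Lemma is_diff_dot {m} (u du v dv : V -> 'cV[R]_m) x :
  is_diff x u du -> is_diff x v dv ->
  is_diff x (fun s => dot (u s) (v s)) (fun h => dot (du h) (v x) + dot (u x) (dv h)).
Proof.
move=> Hu Hv; have /is_diff_mxP /(_ 0 0) := is_diff_mulmx (is_diff_trmx Hu) Hv.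
rewrite (_ : (fun s => _) = fun s => dot (u s) (v s)); last first.
  by apply/funext => s; rewrite dotE.
by move/is_diff_eq; apply; apply/funext => h; rewrite mxE !dotE.
Qed.

Lemma differentiable_det {m} (F : V -> 'M[R]_m) x :
  (forall i j, differentiable (fun s => F s i j) x) ->
  differentiable (fun s => \det (F s)) x.
Proof.
move=> HF; rewrite /determinant -fct_sumE.
elim/big_ind: _ => // [f g ? ?|sg _]; first exact: differentiableD.
apply: differentiableM; first exact: differentiable_cst.
by apply: differentiable_prod => i _.
Qed.

Lemma near_unitmx {m} (F dF : V -> 'M[R]_m) x :
  is_diff x F dF -> F x \in unitmx -> \forall s \near x, F s \in unitmx.
Proof.
move=> /is_diff_mxP dF_ij; rewrite unitmxE unitfE => detFx.
have dF_det : differentiable (fun s => \det (F s)) x.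
  by apply: differentiable_det => i j; case: (dF_ij i j).
have := @cvgr_neq0 _ _ _ _ _ _ _ (differentiable_continuous dF_det) detFx.
move=> det_near; near=> s; rewrite unitmxE unitfE; near: s; exact: det_near.
Unshelve. all: by end_near.
Qed.

Lemma is_diff_invmx {m} (L dL : V -> 'M[R]_m) x :
  is_diff x L dL -> L x \in unitmx ->
  is_diff x (fun s => invmx (L s)) (fun h => - (invmx (L x) *m dL h *m invmx (L x))).
Proof.
move=> HL Lx.
have dL_ij i j : differentiable (fun s => L s i j) x.
  by have /is_diff_mxP /(_ i j) [] := HL.
have Lnear := near_unitmx HL Lx.
pose cof s i j := (\det (L s))^-1 * \adj (L s) i j.
have dcof i j : differentiable (fun s => cof s i j) x.
  apply: differentiableM.
    by apply: differentiableV; [exact: differentiable_det | rewrite -unitfE -unitmxE].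
  rewrite (_ : (fun s => _) = fun s => (-1) ^+ (j + i) * \det (row' j (col' i (L s)))).
    apply: differentiableM; first exact: differentiable_cst.
    by apply: differentiable_det => a b; under eq_fun do rewrite !mxE.
  by apply/funext => s; rewrite mxE.
pose D h := \matrix_(i, j) 'd (fun s => cof s i j) x h.
have HI : is_diff x (fun s => invmx (L s)) D.
  apply/is_diff_mxP => i j; apply: is_diff_eq; last by apply/funext => h; rewrite mxE.
  apply: near_eq_is_diff (differentiableP (dcof i j)); near=> s.
  by rewrite /invmx /cof ifT ?mxE //; near: s.
have LI1 : is_diff x (fun s => L s *m invmx (L s)) (fun _ => 0).
  apply: near_eq_is_diff (is_diff_cst 1%:M x); near=> s.
  by apply: mulmxV; near: s.
have dLI h : dL h *m invmx (L x) + L x *m D h = 0.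
  by have /(congr1 (fun F => F h)) := is_diff_unique (is_diff_mulmx HL HI) LI1.
apply: is_diff_eq HI _; apply/funext => h.
have LD : L x *m D h = - (dL h *m invmx (L x)) by apply/eqP; rewrite -addr_eq0 addrC dLI.
by rewrite -(mulKmx Lx (D h)) LD mulmxN mulmxA.
Unshelve. all: by end_near.
Qed.

End MatrixDifferential.

Lemma unitmx_trmx_mul_add_diag {R : realFieldType} {m k} (M : 'M[R]_(m, k)) (d : 'rV[R]_k) :
  (forall j, 0 < d 0 j) -> M^T *m M + diag_mx d \in unitmx.
Proof.
move=> d_gt0; rewrite unitmxE unitfE.
apply/negP => /det0P [v /matrix0Pn [i [j vj]] vA].
have : (v *m (M^T *m M + diag_mx d) *m v^T) 0 0 = 0 by rewrite vA mul0mx mxE.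
rewrite mulmxDr mulmxDl mxE.
have -> : (v *m (M^T *m M) *m v^T) 0 0 = \sum_a (M *m v^T) a 0 ^+ 2.
  rewrite mulmxA -[v]trmxK -trmx_mul trmxK -mulmxA mxE.
  by apply: eq_bigr => a _; rewrite mxE expr2.
have -> : (v *m diag_mx d *m v^T) 0 0 = \sum_b d 0 b * v 0 b ^+ 2.
  by rewrite mul_mx_diag mxE; apply: eq_bigr => b _; rewrite !mxE; ring.
apply/eqP; rewrite gt_eqF // ltr_wpDl ?sumr_ge0 // => [a _|]; first exact: sqr_ge0.
rewrite (bigD1 j) //= ltr_pwDl ?sumr_ge0 //.
  by rewrite (ord1 i) in vj; rewrite mulr_gt0 // exprn_even_gt0.
by move=> b _; rewrite mulr_ge0 ?sqr_ge0 ?ltW.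
Qed.

Lemma MPinv_invmx {R : realType} {p} (A : 'M[R]_p) : A \in unitmx -> MPinv A = invmx A.
Proof.
move=> Au; have [ABA _ _ _] : is_MPinv A (MPinv A).
  by apply: xgetPex; exists (invmx A); split; rewrite ?mulmxV ?mulVmx ?mul1mx ?trmx1.
transitivity (invmx A *m (A *m MPinv A *m A) *m invmx A).
  by rewrite !mulmxA mulVmx // mul1mx -mulmxA mulmxV // mulmx1.
by rewrite ABA mulVmx // mul1mx.
Qed.

Lemma is_diff_has_gradient {R : realType} {p} (F : 'cV[R]_p -> R) x gr :
  is_diff x F (dot gr) -> has_gradient F x gr.
Proof. by move=> [dF dFE]; split => // h; rewrite dFE. Qed.

Section Hadamard.
Context {R : realType} {p : nat}.
Implicit Types u v w : 'cV[R]_p.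

Lemma hadamE u v : hadam u v = Tt u *m v.
Proof. by apply/matrixP => i j; rewrite mul_diag_mx !mxE (ord1 j). Qed.

Lemma dot_hadaml u v w : dot (hadam u v) w = dot v (Tt w *m u).
Proof. by apply: eq_bigr => j _; rewrite mul_diag_mx !mxE; ring. Qed.

Lemma dot_hadamr u v w : dot u (hadam v w) = dot (hadam u v) w.
Proof. by apply: eq_bigr => j _; rewrite !mxE mulrA. Qed.

Lemma is_diff_expR (r : R) : is_diff r expR (fun h => h * expR r).
Proof.
have dr : differentiable expR r by apply/derivable1_diffP; exact: derivable_expR.
by split=> //; rewrite diff1E // derive1E derive_val; apply/funext => h.
Qed.

Lemma is_diff_t_of w : is_diff w (@t_of R p)
  (fun h => hadam (hadam (2 *: w) (\col_j expR (- (w j 0 * w j 0)))) h).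
Proof.
apply/is_diff_mxP => i j; rewrite (ord1 j).
have /is_diff_mxP /(_ i 0) Hwi := is_diff_id w.
have He := is_diff_comp (is_diffN (is_diffM Hwi Hwi)) (is_diff_expR _).
rewrite (_ : (fun s => t_of s i 0) = fun s => 1 - expR (- (s i 0 * s i 0))); last first.
  by apply/funext => s; rewrite mxE expr2.
apply: is_diff_eq (is_diffB (is_diff_cst (1 : R) w) He) _.
by apply/funext => h; rewrite !fctE !mxE scaleRE -[0 h]/(0 : R); ring.
Qed.

Lemma t_of_sqr_lt1 w j : t_of w j 0 ^+ 2 < 1.
Proof.
have e_gt0 := expR_gt0 (- (w j 0 ^+ 2)).
have e_le1 : expR (- (w j 0 ^+ 2)) <= 1 by rewrite expR_le1 oppr_le0 sqr_ge0.
rewrite mxE; nra.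
Qed.

End Hadamard.

Section Gradient.
Variables (R : realType) (n p : nat) (X : 'M[R]_(n, p)) (y : 'cV[R]_n) (delta lambda : R).

Local Notation L := (Lt X delta).
Local Notation q := ((n%:R)^-1 *: (X^T *m y)).
Implicit Types t k : 'cV[R]_p.

Definition betat_invmx t : 'cV[R]_p := invmx (L t) *m ((n%:R)^-1 *: ((Xt X t)^T *m y)).

Definition residual t : 'cV[R]_n := y - Xt X t *m betat_invmx t.

Definition dLt t k : 'M[R]_p := (n%:R)^-1 *:
  ((Xt X k)^T *m Xt X t + (Xt X t)^T *m Xt X k - delta *: (Tt k *m Tt t + Tt t *m Tt k)).

Lemma betatE t : L t \in unitmx -> betat X y delta t = betat_invmx t.
Proof. by move=> Lu; rewrite /betat MPinv_invmx. Qed.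

Lemma Lt_unitmx t :
  (0 < n)%N -> 0 < delta -> (forall j, t j 0 ^+ 2 < 1) -> L t \in unitmx.
Proof.
move=> n_gt0 delta_gt0 t_lt1; rewrite /Lt.
have -> : delta *: (1%:M - Tt t *m Tt t) = diag_mx (\row_j (delta * (1 - t j 0 ^+ 2))).
  apply/matrixP => i j; rewrite /Tt mulmx_diag !mxE.
  by case: eqP => [->|_]; rewrite ?mulr1n ?mulr0n ?subrr ?mulr0 // expr2.
rewrite unitmxZ ?unitfE ?invr_eq0 ?pnatr_eq0 -?lt0n //.
by apply: unitmx_trmx_mul_add_diag => j; rewrite mxE mulr_gt0 // subr_gt0.
Qed.

Lemma tr_Tt t : (Tt t)^T = Tt t.
Proof. exact: tr_diag_mx. Qed.

Lemma tr_G : (G X)^T = G X.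
Proof. by rewrite /G linearZ /= trmx_mul trmxK. Qed.

Lemma tr_Lt t : (L t)^T = L t.
Proof. by rewrite /Lt linearZ linearD linearZ linearB /= trmx1 !trmx_mul trmxK !tr_Tt. Qed.

Lemma is_diff_Tt t : is_diff t (@Tt R p) (@Tt R p).
Proof. exact: is_diff_diag_mx (is_diff_trmx (is_diff_id t)). Qed.

Lemma is_diff_Xt t : is_diff t (Xt X) (Xt X).
Proof.
apply: is_diff_eq (is_diff_mulmx (is_diff_cst X t) (is_diff_Tt t)) _.
by apply/funext => k; rewrite mul0mx add0r.
Qed.

Lemma is_diff_Lt t : is_diff t L (dLt t).
Proof.
have HX := is_diff_Xt t; have HT := is_diff_Tt t.
have HXX := is_diff_mulmx (is_diff_trmx HX) HX.
have HTT := is_diffB (is_diff_cst 1%:M t) (is_diff_mulmx HT HT).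
apply: is_diff_eq (is_diffZ (n%:R^-1) (is_diffD HXX (is_diffZ delta HTT))) _.
by apply/funext => k; rewrite /dLt !fctE sub0r scalerN.
Qed.

Lemma scale_trXt_y t : (n%:R)^-1 *: ((Xt X t)^T *m y) = Tt t *m q.
Proof. by rewrite trmx_mul tr_Tt -mulmxA scalemxAr. Qed.

Lemma is_diff_betat_invmx t : L t \in unitmx -> is_diff t betat_invmx
  (fun k => invmx (L t) *m (Tt k *m q - dLt t k *m betat_invmx t)).
Proof.
move=> Lu.
have HXy := is_diff_mulmx (is_diff_trmx (is_diff_Xt t)) (is_diff_cst y t).
have HU := is_diffZ (n%:R^-1) HXy.
apply: is_diff_eq (is_diff_mulmx (is_diff_invmx (is_diff_Lt t) Lu) HU) _.
apply/funext => k; rewrite !fctE mulmx0 addr0 !scale_trXt_y /betat_invmx scale_trXt_y.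
by rewrite mulmxBr addrC mulNmx !mulmxA.
Qed.

Lemma is_diff_residual t : L t \in unitmx -> is_diff t residual
  (fun k => - (Xt X k *m betat_invmx t +
               Xt X t *m (invmx (L t) *m (Tt k *m q - dLt t k *m betat_invmx t)))).
Proof.
move=> Lu; have HXb := is_diff_mulmx (is_diff_Xt t) (is_diff_betat_invmx Lu).
apply: is_diff_eq (is_diffB (is_diff_cst y t) HXb) _.
by apply/funext => k; rewrite !fctE sub0r.
Qed.

Lemma trX_residual t :
  L t \in unitmx -> (n%:R)^-1 *: (X^T *m residual t) = - a_t X y delta t.
Proof.
move=> Lu; rewrite /a_t /residual /G betatE // hadamE mulmxBr scalerBr opprB.
by rewrite -scalemxAl !mulmxA.
Qed.

Lemma dLt_mul t k (v : 'cV[R]_p) : dLt t k *m v =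
  Tt k *m (G X *m (Tt t *m v)) + Tt t *m (G X *m (Tt k *m v))
  - (delta / n%:R) *: (Tt k *m (Tt t *m v) + Tt t *m (Tt k *m v)).
Proof.
rewrite /dLt /G /Xt !trmx_mul !tr_Tt -scalemxAl !mulmxBl !mulmxDl -!scalemxAl.
by rewrite -!scalemxAr !mulmxA scalerBr scalerDr scalerA mulrC mulmxDl.
Qed.

Lemma dot_residual_diff t k : L t \in unitmx ->
  (n%:R)^-1 * dot (residual t) (- (Xt X k *m betat_invmx t +
      Xt X t *m (invmx (L t) *m (Tt k *m q - dLt t k *m betat_invmx t)))) =
  dot (hadam (betat X y delta t) (a_t X y delta t - d_t X y delta t)) k -
  dot (hadam (b_t X y delta t) (c_t X y delta t)) k.
Proof.
move=> Lu; rewrite -betatE //.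
set beta := betat X y delta t; set a := a_t X y delta t.
set b := b_t X y delta t; set c := c_t X y delta t; set d := d_t X y delta t.
have aX v : (n%:R)^-1 * dot (residual t) (X *m v) = - dot a v.
  by rewrite dotMr dotC -dotZr trX_residual // dotNr dotC.
have ca w : dot a (Tt t *m (invmx (L t) *m w)) = dot c w.
  by rewrite !dotMr tr_Tt trmx_inv tr_Lt /c /c_t -/a hadamE.
have cd w : dot c (Tt t *m (G X *m w)) - delta / n%:R * dot c (Tt t *m w) = dot d w.
  rewrite !dotMr tr_G tr_Tt /d /d_t -/c hadamE mulmxBl scalemx1 mul_scalar_mx.
  by rewrite [RHS]dotC dotBr dotZr !(dotC w).
rewrite /Xt -!mulmxA dotNr mulrN dotDr mulrDr !aX ca dotBr dLt_mul.
rewrite !dot_hadaml [dot (a - d) _]dotC [in RHS]dotBr ![dot (Tt k *m beta) _]dotC -cd.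
rewrite /b /b_t /a_t !hadamE -/beta !(mulmxBr, dotBr, dotDr) -!scalemxAr !dotZr dotDr.
ring.
Qed.

Lemma f_lam_nearE t : L t \in unitmx -> \forall s \near t,
  f_lam X y delta lambda s =
  (n%:R)^-1 * dot (residual s) (residual s) + lambda * dot (const_mx 1) s.
Proof.
move=> Lu; have Lnear := near_unitmx (is_diff_Lt t) Lu; near=> s.
rewrite /f_lam betatE; last by near: s.
by congr (_ * _ + _ * _); apply: eq_bigr => j _; rewrite ?mxE ?mul1r.
Unshelve. all: by end_near.
Qed.

Lemma is_diff_f_lam t : L t \in unitmx ->
  is_diff t (f_lam X y delta lambda) (dot (zeta X y delta t + lambda *: const_mx 1)).
Proof.
move=> Lu; apply: near_eq_is_diff (f_lam_nearE Lu) _.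
have Hr := is_diff_dot (is_diff_residual Lu) (is_diff_residual Lu).
have H1 := is_diff_dot (is_diff_cst (const_mx 1) t) (is_diff_id t).
apply: is_diff_eq (is_diffD (is_diffZ (n%:R^-1) Hr) (is_diffZ lambda H1)) _.
apply/funext => k; rewrite !fctE !scaleRE dot0l add0r.
set dr := - (_ + _); rewrite (dotC dr) -mulr2n mulrnAr dot_residual_diff //.
rewrite /zeta [RHS]dotC !(dotDr, dotNr, dotZr) ![dot k _]dotC.
ring.
Qed.

End Gradient.

Theorem theorem4 (R : realType) (n p : nat) (X : 'M[R]_(n, p)) (y : 'cV[R]_n)
    (delta lambda : R) :
  (0 < n)%N -> (0 < p)%N -> 0 < delta -> 0 < lambda ->
  (forall t : 'cV[R]_p, (forall j, 0 < t j 0 < 1) ->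
     has_gradient (f_lam X y delta lambda) t
       (zeta X y delta t + lambda *: const_mx 1)) /\
  (forall w : 'cV[R]_p,
     has_gradient (g_lam X y delta lambda) w
       (hadam (zeta X y delta (t_of w) + lambda *: const_mx 1)
              (hadam (2 *: w) (\col_j expR (- (w j 0 * w j 0)))))).
Proof.
move=> n_gt0 _ delta_gt0 _; split => [t t01 | w]; apply: is_diff_has_gradient.
  apply/is_diff_f_lam/Lt_unitmx => // j.
  by have /andP[t_gt0 t_lt1] := t01 j; rewrite expr2; nra.
have Lu : Lt X delta (t_of w) \in unitmx by apply: Lt_unitmx => //; exact: t_of_sqr_lt1.
apply: is_diff_eq (is_diff_comp (is_diff_t_of w) (is_diff_f_lam y lambda Lu)) _.
by apply/funext => h; rewrite /= dot_hadamr.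
Qed.
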